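(* Let $P$ and $W$ be finite point sets in the plane with $P\cup W$ in general position, let $p\in P$ with $W\setminus\{p\}\neq\varnothing$, and let $w_1,\dots,w_t$ be the neighbors of $p$ in the Delaunay triangulation $\mathrm{DT}(W\cup\{p\})$ listed in counterclockwise radial order around $p$ (indices taken cyclically, $w_{t+1}=w_1$). Let $q\in P\setminus\{p\}$ be a point whose direction from $p$ lies strictly between the directions of $w_i$ and $w_{i+1}$ in the counterclockwise sector from $w_i$ to $w_{i+1}$, and let $\measuredangle w_ipw_{i+1}$ denote the counterclockwise angle of that sector. If $\measuredangle w_ipw_{i+1}\ge\pi$, then $p$ and $q$ are adjacent in $\mathrm{DG}^-(P,W)$. If $\measuredangle w_ipw_{i+1}<\pi$, then $p$ and $q$ are adjacent in $\mathrm{DG}^-(P,W)$ if and only if $q$ lies in the interior of the circle through $p$, $w_i$ and $w_{i+1}$.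
   Context: Let $P$ (the vertices) and $W$ (the witnesses) be finite point sets in $\mathbb{R}^2$; $P$ and $W$ may share points. The witness Delaunay graph $\mathrm{DG}^-(P,W)$ is the graph with vertex set $P$ in which distinct $x,y\in P$ are adjacent if and only if there is an open disk containing no point of $W$ whose bounding circle passes through $x$ and $y$. General position of $P\cup W$ means that no three distinct points of $P\cup W$ are collinear and no four distinct points of $P\cup W$ are concyclic. For a finite point set $Q$ in general position, $\mathrm{DT}(Q)$ is its Delaunay triangulation: distinct $a,b\in Q$ are joined iff some open disk whose boundary passes through $a$ and $b$ contains no point of $Q$. *)

From Stdlib Require Import Reals List.
Open Scope R_scope.

Definition pt : Type := (R * R)%type.

Definition vsub (a b : pt) : pt := (fst a - fst b, snd a - snd b).

Definition dist2 (a b : pt) : R := (fst a - fst b) ^ 2 + (snd a - snd b) ^ 2.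

Definition collinear (a b c : pt) : Prop :=
  (fst b - fst a) * (snd c - snd a) - (snd b - snd a) * (fst c - fst a) = 0.

Definition concyclic (a b c d : pt) : Prop :=
  exists (o : pt) (r : R),
    dist2 o a = r /\ dist2 o b = r /\ dist2 o c = r /\ dist2 o d = r.

Definition general_position (S : list pt) : Prop :=
  (forall a b c, In a S -> In b S -> In c S ->
     a <> b -> a <> c -> b <> c -> ~ collinear a b c) /\
  (forall a b c d, In a S -> In b S -> In c S -> In d S ->
     a <> b -> a <> c -> a <> d -> b <> c -> b <> d -> c <> d ->
     ~ concyclic a b c d).

(* there is an open disk (center c, squared radius r) whose bounding circle
   passes through x and y and which contains no point of S *)
Definition empty_disk_through (S : list pt) (x y : pt) : Prop :=
  exists (c : pt) (r : R),
    dist2 c x = r /\ dist2 c y = r /\ (forall s, In s S -> r <= dist2 c s).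

Definition DGminus_adj (P W : list pt) (x y : pt) : Prop :=
  In x P /\ In y P /\ x <> y /\ empty_disk_through W x y.

Definition DT_adj (Q : list pt) (a b : pt) : Prop :=
  In a Q /\ In b Q /\ a <> b /\ empty_disk_through Q a b.

Definition rot (t : R) (u : pt) : pt :=
  (cos t * fst u - sin t * snd u, sin t * fst u + cos t * snd u).

(* t is the counterclockwise angle from direction u to direction v,
   normalised to lie in (0, 2*PI] (so equal directions give 2*PI) *)
Definition is_ccw_angle (u v : pt) (t : R) : Prop :=
  0 < t <= 2 * PI /\
  exists k : R, 0 < k /\ rot t u = (k * fst v, k * snd v).

Definition ccw_angle (a p b : pt) (t : R) : Prop :=
  is_ccw_angle (vsub a p) (vsub b p) t.

Definition in_circle_interior (a b c q : pt) : Prop :=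
  exists (o : pt) (r : R),
    dist2 o a = r /\ dist2 o b = r /\ dist2 o c = r /\ dist2 o q < r.

From Stdlib Require Import Reals List Lra Psatz Classical.
Open Scope R_scope.

(* Translate [p] to the origin. A circle through the origin with centre [c] is
   described by the power [n2 x - 2 dot c x], which is affine in [c]; expanding a
   point in the basis formed by the two neighbours [a] and [b] turns comparisons
   between circles into sign conditions on cross products.  Growing disks through
   [p] shows that a disk through [p] containing a witness also contains a Delaunay
   neighbour of [p].  For a reflex angle, the open half-plane bounded by the line
   through [p] and [a] (or [b]) that contains [q] therefore holds no witness, and a
   large disk through [p] and [q] inside it is empty.  For a convex angle, the disk
   bounded by the circle through [p], [a], [b] holds no witness; shrinking it about
   [p] gives an empty disk through [q] when [q] is inside, and conversely an empty
   disk through [p] and [q] forces [q] into the circle, strictly by general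
   position. *)

Definition dot (u v : pt) : R := fst u * fst v + snd u * snd v.
Definition cr (u v : pt) : R := fst u * snd v - snd u * fst v.
Definition n2 (u : pt) : R := dot u u.
Definition scal (l : R) (u : pt) : pt := (l * fst u, l * snd u).
Definition perp (u : pt) : pt := (- snd u, fst u).
Definition vadd (p u : pt) : pt := (fst p + fst u, snd p + snd u).

(* Power of [x] with respect to the circle centred at [c] through the origin:
   negative inside the circle, zero on it. *)
Definition power (c x : pt) : R := n2 x - 2 * dot c x.

(* The open disk centred at [p + c] whose boundary passes through [p]
   contains no point of [S]. *)
Definition empty_disk (S : list pt) (p c : pt) : Prop :=
  forall s, In s S -> 0 <= power c (vsub s p).

Lemma n2_nonneg u : 0 <= n2 u.
Proof. destruct u; unfold n2, dot; simpl; nra. Qed.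

Lemma n2_vsub_pos x p : x <> p -> 0 < n2 (vsub x p).
Proof.
  destruct x as [x1 x2], p as [p1 p2]; unfold n2, dot, vsub; simpl; intro Hne.
  apply Rnot_le_lt; intro Hle; apply Hne.
  pose proof (Rle_0_sqr (x1 - p1)); pose proof (Rle_0_sqr (x2 - p2)); unfold Rsqr in *.
  assert (E1 : (x1 - p1) * (x1 - p1) = 0) by lra.
  assert (E2 : (x2 - p2) * (x2 - p2) = 0) by lra.
  apply Rmult_integral in E1, E2.
  f_equal; lra.
Qed.

Lemma dot_scal l u v : dot (scal l u) v = l * dot u v.
Proof. unfold dot, scal; simpl; ring. Qed.

Lemma dot_perp u v : dot (perp u) v = cr u v.
Proof. unfold dot, perp, cr; simpl; ring. Qed.

Lemma cr_self u : cr u u = 0.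
Proof. unfold cr; ring. Qed.

Lemma cr_anti u v : cr u v = - cr v u.
Proof. unfold cr; ring. Qed.

Lemma neq_of_cr_gt_0 p x y : 0 < cr (vsub x p) (vsub y p) -> x <> y.
Proof. intros H ->; rewrite cr_self in H; lra. Qed.

Lemma vsub_vadd p u : vsub (vadd p u) p = u.
Proof. destruct p, u; unfold vsub, vadd; simpl; f_equal; ring. Qed.

Lemma power_vsub_self c p : power c (vsub p p) = 0.
Proof. destruct p; unfold power, n2, dot, vsub; simpl; ring. Qed.

Lemma dist2_power O p x : dist2 O x = n2 (vsub O p) + power (vsub O p) (vsub x p).
Proof. destruct O, p, x; unfold dist2, power, n2, dot, vsub; simpl; ring. Qed.

(* Writing [w] in the basis [a], [b]: the power is affine in the centre. *)
Lemma power_cross_identity a b c o w :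
  cr a b * (power c w - power o w) =
  cr w b * (power c a - power o a) + cr a w * (power c b - power o b).
Proof. destruct a, b, c, o, w; unfold cr, power, n2, dot; simpl; ring. Qed.

Lemma power_scal_through n x :
  0 < dot n x -> power (scal (n2 x / (2 * dot n x)) n) x = 0.
Proof. intro Hn; unfold power; rewrite dot_scal; field; lra. Qed.

Lemma empty_disk_through_iff S p x :
  empty_disk_through S p x <-> exists c, power c (vsub x p) = 0 /\ empty_disk S p c.
Proof.
  split.
  - intros [O [r [Hp [Hx HS]]]]; exists (vsub O p).
    rewrite (dist2_power O p p), power_vsub_self in Hp.
    rewrite (dist2_power O p x) in Hx.
    split; [lra|].
    intros s Hs; specialize (HS s Hs); rewrite (dist2_power O p s) in HS; lra.
  - intros [c [Hx HS]]; exists (vadd p c), (n2 c).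
    rewrite !(dist2_power (vadd p c) p), !vsub_vadd, power_vsub_self.
    repeat split; try lra.
    intros s Hs; specialize (HS s Hs).
    rewrite (dist2_power _ p s), vsub_vadd; lra.
Qed.

Lemma in_circle_interior_iff p a b q :
  in_circle_interior p a b q <->
  exists o, power o (vsub a p) = 0 /\ power o (vsub b p) = 0 /\ power o (vsub q p) < 0.
Proof.
  split.
  - intros [O [r [Hp [Ha [Hb Hq]]]]]; exists (vsub O p).
    rewrite (dist2_power O p p), power_vsub_self in Hp.
    rewrite (dist2_power O p) in Ha, Hb, Hq.
    repeat split; lra.
  - intros [o [Ha [Hb Hq]]]; exists (vadd p o), (n2 o).
    rewrite !(dist2_power (vadd p o) p), !vsub_vadd, power_vsub_self.
    repeat split; lra.
Qed.

Lemma concyclic_of_power p a b q o :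
  power o (vsub a p) = 0 -> power o (vsub b p) = 0 -> power o (vsub q p) = 0 ->
  concyclic p a b q.
Proof.
  intros Ha Hb Hq; exists (vadd p o), (n2 o).
  rewrite !(dist2_power (vadd p o) p), !vsub_vadd, power_vsub_self.
  repeat split; lra.
Qed.

Lemma circumcenter_exists a b :
  cr a b <> 0 -> exists o, power o a = 0 /\ power o b = 0.
Proof.
  intro D.
  exists ((n2 a * snd b - n2 b * snd a) / (2 * cr a b),
          (fst a * n2 b - fst b * n2 a) / (2 * cr a b)).
  unfold power, n2, dot, cr in *; simpl; split; field; exact D.
Qed.

Lemma empty_disk_cons_self S p c : empty_disk (p :: S) p c <-> empty_disk S p c.
Proof.
  split; intros H s Hs.
  - apply H; right; exact Hs.
  - destruct Hs as [<-|Hs]; [rewrite power_vsub_self; lra | auto].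
Qed.

Lemma empty_disk_scal S p n l :
  0 <= l ->
  (forall s, In s S -> 0 < dot n (vsub s p) -> 2 * l * dot n (vsub s p) <= n2 (vsub s p)) ->
  empty_disk S p (scal l n).
Proof.
  intros Hl H s Hs; unfold power; rewrite dot_scal.
  destruct (Rlt_dec 0 (dot n (vsub s p))) as [Hpos|Hpos].
  - specialize (H s Hs Hpos); lra.
  - pose proof (n2_nonneg (vsub s p)); nra.
Qed.

Lemma empty_disk_shrink S p o l :
  0 <= l <= 1 -> empty_disk S p o -> empty_disk S p (scal l o).
Proof.
  intros Hl Ho; apply empty_disk_scal; [lra|].
  intros s Hs Hpos; specialize (Ho s Hs); unfold power in Ho; nra.
Qed.

(* Shrink the disk towards [p] until its boundary meets [q]. *)
Lemma empty_disk_through_of_inside S p o q :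
  power o (vsub q p) < 0 -> empty_disk S p o -> empty_disk_through S p q.
Proof.
  intros Hq Ho; apply empty_disk_through_iff.
  pose proof (n2_nonneg (vsub q p)) as Hn.
  assert (Hd : 0 < dot o (vsub q p)) by (unfold power in Hq; lra).
  set (l := n2 (vsub q p) / (2 * dot o (vsub q p))).
  assert (Hl : 2 * l * dot o (vsub q p) = n2 (vsub q p)) by (unfold l; field; lra).
  exists (scal l o); split.
  - now apply power_scal_through.
  - apply empty_disk_shrink; [|exact Ho].
    unfold power in Hq; split; nra.
Qed.

Lemma ex_argmin_in {A : Type} (l : list A) (P : A -> Prop) (f : A -> R) :
  (exists x, In x l /\ P x) ->
  exists y, In y l /\ P y /\ forall x, In x l -> P x -> f y <= f x.
Proof.
  induction l as [|a l IH]; intros [x [Hx HPx]]; [destruct Hx|].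
  destruct (classic (exists x, In x l /\ P x)) as [Hl|Hl].
  - destruct (IH Hl) as [y [Hy [HPy Hmin]]].
    destruct (classic (P a /\ f a <= f y)) as [[HPa Ha]|Ha].
    + exists a; split; [left; reflexivity|]; split; [exact HPa|].
      intros z [<-|Hz] HPz; [lra|]. specialize (Hmin z Hz HPz); lra.
    + exists y; split; [right; exact Hy|]; split; [exact HPy|].
      intros z [<-|Hz] HPz; [|auto].
      apply Rnot_lt_le; intro Hlt; apply Ha; split; [exact HPz | lra].
  - destruct Hx as [<-|Hx]; [|exfalso; eauto].
    exists a; split; [left; reflexivity|]; split; [exact HPx|].
    intros z [<-|Hz] HPz; [lra | exfalso; eauto].
Qed.

Lemma DT_adj_center W p x :
  DT_adj (p :: W) p x ->
  In x W /\ x <> p /\ exists c, power c (vsub x p) = 0 /\ empty_disk W p c.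
Proof.
  intros [_ [[<-|Hx] [Hne Hd]]]; [congruence|].
  apply empty_disk_through_iff in Hd as [c [Hc HW]].
  repeat split; auto.
  exists c; split; [exact Hc|]. now apply empty_disk_cons_self.
Qed.

(* Grow the disks through [p] centred on the ray from [p] towards [p + o]: the first
   point of [W] met minimises [n2 w' / dot o w'], is a Delaunay neighbour of [p] and
   lies in the original disk. *)
Lemma DT_neighbor_in_disk W p o :
  (exists s, In s W /\ power o (vsub s p) < 0) ->
  exists w, DT_adj (p :: W) p w /\ power o (vsub w p) < 0.
Proof.
  intros [s [Hs Hso]].
  set (d w := dot o (vsub w p)); set (ratio w := n2 (vsub w p) / d w).
  assert (Hratio : forall w, 0 < d w -> n2 (vsub w p) = ratio w * d w)
    by (intros w Hw; unfold ratio; field; lra).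
  assert (Hds : 0 < d s)
    by (pose proof (n2_nonneg (vsub s p)); unfold d, power in *; lra).
  destruct (ex_argmin_in W (fun w => 0 < d w) ratio) as [w [Hw [Hdw Hmin]]];
    [now exists s|].
  assert (Hws : power o (vsub w p) < 0).
  { specialize (Hmin s Hs Hds).
    unfold power in *; fold (d w); fold (d s) in Hso.
    rewrite (Hratio s Hds) in Hso; rewrite (Hratio w Hdw).
    assert (ratio s < 2) by nra. nra. }
  exists w; split; [|exact Hws].
  assert (Hwp : p <> w)
    by (intros <-; unfold d in Hdw; unfold dot, vsub in Hdw; simpl in Hdw; lra).
  split; [left; reflexivity|]; split; [right; exact Hw|]; split; [exact Hwp|].
  apply empty_disk_through_iff.
  set (l := n2 (vsub w p) / (2 * d w)).
  assert (Hl : 2 * l = ratio w) by (unfold l, ratio; field; lra).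
  exists (scal l o); split.
  - now apply power_scal_through.
  - apply empty_disk_cons_self, empty_disk_scal.
    + pose proof (n2_nonneg (vsub w p)); pose proof (Hratio w Hdw); nra.
    + intros z Hz Hdz; change (dot o (vsub z p)) with (d z) in *.
      specialize (Hmin z Hz Hdz).
      rewrite Hl, (Hratio z Hdz); nra.
Qed.

Lemma empty_disk_through_of_halfplane W p n q :
  (forall w, DT_adj (p :: W) p w -> dot n (vsub w p) <= 0) ->
  0 < dot n (vsub q p) -> empty_disk_through W p q.
Proof.
  intros Hnb Hq.
  (* A witness in the open half-plane lies in a large disk through [p] centred
     along [n], and then so does a Delaunay neighbour. *)
  assert (HW : forall s, In s W -> dot n (vsub s p) <= 0).
  { intros s Hs; apply Rnot_lt_le; intro Hsn.
    set (t := (n2 (vsub s p) + 1) / dot n (vsub s p)).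
    assert (Ht : t * dot n (vsub s p) = n2 (vsub s p) + 1) by (unfold t; field; lra).
    assert (Ht0 : 0 < t)
      by (pose proof (n2_nonneg (vsub s p)); unfold t; apply Rdiv_pos_pos; lra).
    destruct (DT_neighbor_in_disk W p (scal t n)) as [w [Hw Hwin]].
    { exists s; split; [exact Hs|]; unfold power; rewrite dot_scal.
      pose proof (n2_nonneg (vsub s p)); lra. }
    specialize (Hnb w Hw).
    unfold power in Hwin; rewrite dot_scal in Hwin.
    pose proof (n2_nonneg (vsub w p)); nra. }
  apply empty_disk_through_iff.
  exists (scal (n2 (vsub q p) / (2 * dot n (vsub q p))) n); split.
  - now apply power_scal_through.
  - apply empty_disk_scal.
    + pose proof (n2_nonneg (vsub q p)).
      apply Rle_mult_inv_pos; lra.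
    + intros s Hs Hsn; specialize (HW s Hs); lra.
Qed.

(* If some point of [W] were inside the circle through [p], [a], [b], a Delaunay
   neighbour [w] would be, and comparing with the empty disks through [a] and
   through [b] puts [w] strictly inside the sector from [a] to [b]. *)
Lemma circumdisk_empty W p a b o :
  DT_adj (p :: W) p a -> DT_adj (p :: W) p b -> 0 < cr (vsub a p) (vsub b p) ->
  power o (vsub a p) = 0 -> power o (vsub b p) = 0 ->
  (forall w, DT_adj (p :: W) p w ->
     ~ (0 < cr (vsub a p) (vsub w p) /\ 0 < cr (vsub w p) (vsub b p))) ->
  empty_disk W p o.
Proof.
  intros Ha Hb HD Hoa Hob Hsector s Hs; apply Rnot_lt_le; intro Hso.
  destruct (DT_neighbor_in_disk W p o) as [w [Hw Hwo]]; [now exists s|].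
  apply (Hsector w Hw).
  destruct (DT_adj_center W p a Ha) as [HaW [_ [ca [Hca HcaW]]]].
  destruct (DT_adj_center W p b Hb) as [HbW [_ [cb [Hcb HcbW]]]].
  destruct (DT_adj_center W p w Hw) as [HwW _].
  pose proof (power_cross_identity (vsub a p) (vsub b p) ca o (vsub w p)) as Ia.
  pose proof (power_cross_identity (vsub a p) (vsub b p) cb o (vsub w p)) as Ib.
  pose proof (HcaW b HbW); pose proof (HcaW w HwW).
  pose proof (HcbW a HaW); pose proof (HcbW w HwW).
  rewrite Hoa, Hob, Hca in Ia; rewrite Hoa, Hob, Hcb in Ib.
  split; nra.
Qed.

Lemma DGminus_adj_iff_in_circle P W p a b q :
  general_position (P ++ W) -> In p P -> In q P -> q <> p ->
  DT_adj (p :: W) p a -> DT_adj (p :: W) p b ->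
  0 < cr (vsub a p) (vsub b p) ->
  0 < cr (vsub a p) (vsub q p) -> 0 < cr (vsub q p) (vsub b p) ->
  (forall w, DT_adj (p :: W) p w ->
     ~ (0 < cr (vsub a p) (vsub w p) /\ 0 < cr (vsub w p) (vsub b p))) ->
  DGminus_adj P W p q <-> in_circle_interior p a b q.
Proof.
  intros [_ HG] HpP HqP Hqp Ha Hb Hab Haq Hqb Hsector.
  destruct (DT_adj_center W p a Ha) as [HaW [Hap _]].
  destruct (DT_adj_center W p b Hb) as [HbW [Hbp _]].
  split.
  - intros [_ [_ [_ Hd]]]; apply empty_disk_through_iff in Hd as [c [Hcq HcW]].
    destruct (circumcenter_exists (vsub a p) (vsub b p)) as [o [Hoa Hob]]; [lra|].
    pose proof (power_cross_identity (vsub a p) (vsub b p) c o (vsub q p)) as I.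
    pose proof (HcW a HaW); pose proof (HcW b HbW).
    rewrite Hoa, Hob, Hcq in I.
    assert (Hoq : power o (vsub q p) <= 0) by nra.
    apply in_circle_interior_iff; exists o; repeat split; try assumption.
    destruct Hoq as [Hlt|Heq]; [exact Hlt|exfalso].
    pose proof (neq_of_cr_gt_0 p a b Hab); pose proof (neq_of_cr_gt_0 p a q Haq).
    pose proof (neq_of_cr_gt_0 p q b Hqb).
    apply (HG p a b q); try (apply in_or_app; auto); try congruence.
    exact (concyclic_of_power p a b q o Hoa Hob Heq).
  - intros Hin; apply in_circle_interior_iff in Hin as [o [Hoa [Hob Hoq]]].
    split; [exact HpP|]; split; [exact HqP|]; split; [congruence|].
    apply (empty_disk_through_of_inside W p o q Hoq).
    exact (circumdisk_empty W p a b o Ha Hb Hab Hoa Hob Hsector).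
Qed.

Lemma polar_coordinates x y :
  0 < x * x + y * y ->
  exists al r, 0 <= al < 2 * PI /\ 0 < r /\ x = r * cos al /\ y = r * sin al.
Proof.
  intro Hxy; pose proof PI_RGT_0.
  set (r := sqrt (x * x + y * y)).
  assert (Hr : 0 < r) by (apply sqrt_lt_R0; lra).
  assert (Hr2 : r * r = x * x + y * y) by (apply sqrt_sqrt; lra).
  assert (Hc : x / r * (x / r) + y / r * (y / r) = 1).
  { replace (x / r * (x / r) + y / r * (y / r)) with ((x * x + y * y) / (r * r))
      by (field; lra).
    rewrite <- Hr2; field; lra. }
  assert (Hsin : sqrt (1 - x / r * (x / r)) = Rabs (y / r))
    by (rewrite <- sqrt_Rsqr_abs; unfold Rsqr; f_equal; lra).
  assert (Hx1 : -1 <= x / r <= 1) by (split; nra).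
  destruct (Rle_or_lt 0 y) as [Hy|Hy].
  - exists (acos (x / r)), r; pose proof (acos_bound (x / r)).
    repeat split; [lra | lra | exact Hr | |].
    + rewrite cos_acos by exact Hx1; field; lra.
    + rewrite sin_acos by exact Hx1; unfold Rsqr; rewrite Hsin, Rabs_right.
      * field; lra.
      * apply Rle_ge, Rle_mult_inv_pos; lra.
  - assert (Hyr : y / r < 0) by (apply Rdiv_neg_pos; lra).
    assert (Hx1' : -1 < x / r < 1) by (split; nra).
    exists (2 * PI - acos (x / r)), r; pose proof (acos_bound_lt (x / r) Hx1').
    repeat split; [lra | lra | exact Hr | |];
      rewrite ?cos_minus, ?sin_minus, cos_2PI, sin_2PI.
    + rewrite cos_acos by exact Hx1; field; lra.
    + rewrite sin_acos by exact Hx1; unfold Rsqr; rewrite Hsin, Rabs_left by exact Hyr.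
      field; lra.
Qed.

(* Polar coordinates of [(dot u v, cr u v)] give the angle from [u] to [v]. *)
Lemma ccw_angle_exists u v : 0 < n2 u -> 0 < n2 v -> exists t, is_ccw_angle u v t.
Proof.
  intros Hu Hv; pose proof PI_RGT_0.
  assert (Hlag : dot u v * dot u v + cr u v * cr u v = n2 u * n2 v)
    by (unfold n2, dot, cr; ring).
  destruct (polar_coordinates (dot u v) (cr u v)) as [al [r [Hal [Hr [Ed Ec]]]]];
    [rewrite Hlag; nra|].
  assert (Ht : exists t, 0 < t <= 2 * PI /\ cos t = cos al /\ sin t = sin al).
  { destruct (Req_dec al 0) as [->|Hal0].
    - exists (2 * PI); rewrite cos_2PI, sin_2PI, cos_0, sin_0; repeat split; lra.
    - exists al; repeat split; lra. }
  destruct Ht as [t [Ht [Hcos Hsin]]].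
  exists t; split; [exact Ht|]; exists (n2 u / r); split; [apply Rdiv_pos_pos; lra|].
  assert (Hc : cos t = dot u v / r) by (rewrite Hcos, Ed; field; lra).
  assert (Hs : sin t = cr u v / r) by (rewrite Hsin, Ec; field; lra).
  unfold rot; rewrite Hc, Hs.
  destruct u, v; unfold n2, dot, cr; simpl; f_equal; field; lra.
Qed.

Lemma cr_ccw_angle u v t :
  0 < n2 u -> is_ccw_angle u v t -> exists k, 0 < k /\ cr u v = k * sin t.
Proof.
  intros Hu [_ [k [Hk E]]]; exists (n2 u / k); split; [apply Rdiv_pos_pos; lra|].
  assert (Hrot : cr u (rot t u) = sin t * n2 u)
    by (destruct u; unfold cr, rot, n2, dot; simpl; ring).
  replace (cr u (rot t u)) with (k * cr u v) in Hrot
    by (rewrite E; unfold cr; simpl; ring).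
  apply (Rmult_eq_reg_l k); [rewrite Hrot; field|]; lra.
Qed.

Lemma cr_ccw_angles u v1 v2 t1 t2 :
  0 < n2 u -> is_ccw_angle u v1 t1 -> is_ccw_angle u v2 t2 ->
  exists k, 0 < k /\ cr v1 v2 = k * sin (t2 - t1).
Proof.
  intros Hu [_ [k1 [Hk1 E1]]] [_ [k2 [Hk2 E2]]].
  exists (n2 u / (k1 * k2)); split; [apply Rdiv_pos_pos; nra|].
  assert (Hrot : cr (rot t1 u) (rot t2 u) = sin (t2 - t1) * n2 u)
    by (destruct u; unfold cr, rot, n2, dot; simpl; rewrite sin_minus; ring).
  replace (cr (rot t1 u) (rot t2 u)) with (k1 * k2 * cr v1 v2) in Hrot
    by (rewrite E1, E2; unfold cr; simpl; ring).
  apply (Rmult_eq_reg_l (k1 * k2)); [rewrite Hrot; field|]; nra.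
Qed.

Lemma cr_gt_0_of_ccw_angle u v t :
  0 < n2 u -> is_ccw_angle u v t -> t < PI -> 0 < cr u v.
Proof.
  intros Hu Ht Hlt; destruct (cr_ccw_angle u v t Hu Ht) as [k [Hk ->]].
  pose proof (sin_gt_0 t (proj1 (proj1 Ht)) Hlt); nra.
Qed.

Lemma cr_le_0_of_ccw_angle u v t :
  0 < n2 u -> is_ccw_angle u v t -> PI <= t -> cr u v <= 0.
Proof.
  intros Hu Ht Hge; destruct (cr_ccw_angle u v t Hu Ht) as [k [Hk ->]].
  pose proof (sin_le_0 t Hge (proj2 (proj1 Ht))); nra.
Qed.

Lemma cr_ge_0_of_ccw_angles u v1 v2 t1 t2 :
  0 < n2 u -> is_ccw_angle u v1 t1 -> is_ccw_angle u v2 t2 ->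
  t1 <= t2 <= t1 + PI -> 0 <= cr v1 v2.
Proof.
  intros Hu H1 H2 Ht; destruct (cr_ccw_angles u v1 v2 t1 t2 Hu H1 H2) as [k [Hk ->]].
  pose proof (sin_ge_0 (t2 - t1) ltac:(lra) ltac:(lra)); nra.
Qed.

Lemma cr_lt_0_of_ccw_angles u v1 v2 t1 t2 :
  0 < n2 u -> is_ccw_angle u v1 t1 -> is_ccw_angle u v2 t2 ->
  t2 < t1 < t2 + PI -> cr v1 v2 < 0.
Proof.
  intros Hu H1 H2 Ht; destruct (cr_ccw_angles u v1 v2 t1 t2 Hu H1 H2) as [k [Hk ->]].
  pose proof (sin_lt_0_var (t2 - t1) ltac:(lra) ltac:(lra)); nra.
Qed.

Lemma ccw_angle_PI_collinear a p q :
  a <> p -> ccw_angle a p q PI -> collinear p a q /\ a <> q.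
Proof.
  intros Hap Hq; pose proof (n2_vsub_pos a p Hap) as Ha; split.
  - destruct (cr_ccw_angle _ _ _ Ha Hq) as [k [_ Hk]].
    rewrite sin_PI, Rmult_0_r in Hk; exact Hk.
  - intros <-; destruct Hq as [_ [k [Hk E]]]; revert Ha E.
    unfold rot, n2, dot; rewrite cos_PI, sin_PI.
    destruct (vsub a p) as [u1 u2]; simpl; intros Ha E; injection E as E1 E2.
    assert (u1 = 0) by nra. assert (u2 = 0) by nra. subst; lra.
Qed.

Lemma DGminus_adj_of_reflex_angle P W p a b q theta phq :
  general_position (P ++ W) -> In p P -> In q P -> q <> p -> In a W -> a <> p ->
  ccw_angle a p b theta -> PI <= theta ->
  (forall w, DT_adj (p :: W) p w -> exists phi, ccw_angle a p w phi /\ theta <= phi) ->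
  ccw_angle a p q phq -> phq < theta ->
  DGminus_adj P W p q.
Proof.
  intros [HG _] HpP HqP Hqp HaW Hap Hth Hpi Hnb Hq Hphq.
  pose proof (n2_vsub_pos a p Hap) as Ha; pose proof (proj1 Hth); pose proof (proj1 Hq).
  assert (HDG : empty_disk_through W p q -> DGminus_adj P W p q)
    by (intro; repeat split; auto; congruence).
  destruct (Rlt_or_le phq PI) as [Hlt|Hge]; [|destruct (Req_dec phq PI) as [->|Hne]].
  - apply HDG, (empty_disk_through_of_halfplane W p (perp (vsub a p))).
    + intros w Hw; destruct (Hnb w Hw) as [phi [Hphi Hle]]; rewrite dot_perp.
      apply (cr_le_0_of_ccw_angle _ _ _ Ha Hphi); lra.
    + rewrite dot_perp; exact (cr_gt_0_of_ccw_angle _ _ _ Ha Hq Hlt).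
  - exfalso; destruct (ccw_angle_PI_collinear a p q Hap Hq) as [Hcol Haq].
    apply (HG p a q); try (apply in_or_app; auto); congruence.
  - apply HDG, (empty_disk_through_of_halfplane W p (scal (-1) (perp (vsub b p)))).
    + intros w Hw; destruct (Hnb w Hw) as [phi [Hphi Hle]]; rewrite dot_scal, dot_perp.
      pose proof (proj1 Hphi).
      pose proof (cr_ge_0_of_ccw_angles _ _ _ _ _ Ha Hth Hphi ltac:(lra)); lra.
    + rewrite dot_scal, dot_perp.
      pose proof (cr_lt_0_of_ccw_angles _ _ _ _ _ Ha Hth Hq ltac:(lra)); lra.
Qed.

Theorem mainTheorem2 :
  forall (P W : list pt) (p a b q : pt) (theta : R),
    general_position (P ++ W) ->
    In p P ->
    (exists w, In w W /\ w <> p) ->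
    DT_adj (p :: W) p a ->
    DT_adj (p :: W) p b ->
    ccw_angle a p b theta ->
    (forall w phi, DT_adj (p :: W) p w -> ccw_angle a p w phi -> theta <= phi) ->
    In q P -> q <> p ->
    (exists phi, ccw_angle a p q phi /\ phi < theta) ->
    (PI <= theta -> DGminus_adj P W p q) /\
    (theta < PI -> (DGminus_adj P W p q <-> in_circle_interior p a b q)).
Proof.
  (* The witness required by the third hypothesis is provided by [a]. *)
  intros P W p a b q theta HG HpP _ Ha Hb Hth Hmin HqP Hqp [phq [Hq Hphq]].
  destruct (DT_adj_center W p a Ha) as [HaW [Hap _]].
  pose proof (n2_vsub_pos a p Hap) as Hna; pose proof (proj1 Hth); pose proof (proj1 Hq).
  assert (Hnb : forall w, DT_adj (p :: W) p w ->
                  exists phi, ccw_angle a p w phi /\ theta <= phi).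
  { intros w Hw; destruct (DT_adj_center W p w Hw) as [_ [Hwp _]].
    destruct (ccw_angle_exists _ _ Hna (n2_vsub_pos w p Hwp)) as [phi Hphi].
    exists phi; split; [exact Hphi | exact (Hmin w phi Hw Hphi)]. }
  split; intro Hpi.
  - exact (DGminus_adj_of_reflex_angle P W p a b q theta phq
             HG HpP HqP Hqp HaW Hap Hth Hpi Hnb Hq Hphq).
  - apply (DGminus_adj_iff_in_circle P W p a b q HG HpP HqP Hqp Ha Hb).
    + exact (cr_gt_0_of_ccw_angle _ _ _ Hna Hth Hpi).
    + apply (cr_gt_0_of_ccw_angle _ _ _ Hna Hq); lra.
    + rewrite cr_anti; pose proof (cr_lt_0_of_ccw_angles _ _ _ _ _ Hna Hth Hq ltac:(lra)).
      lra.
    + intros w Hw [Haw Hwb]; destruct (Hnb w Hw) as [phi [Hphi Hle]].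
      assert (Hphi_pi : phi < PI).
      { apply Rnot_le_lt; intro Hge.
        pose proof (cr_le_0_of_ccw_angle _ _ _ Hna Hphi Hge); lra. }
      pose proof (cr_ge_0_of_ccw_angles _ _ _ _ _ Hna Hth Hphi ltac:(lra)).
      rewrite cr_anti in Hwb; lra.
Qed.
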